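(* Let $C\subseteq\mathbb{F}_2^n$ be a binary linear $[n,k,d]$ code with $\mathbf{1}_n\in C$, whose dual $C^\perp$ has minimum distance $d^\perp$, let $t$ be a positive integer with $$d^\perp-t=\#\{u \mid C_u\neq\emptyset,\ 0<u\le n-t\}=3,$$ and suppose the nonzero weights of $C$ are exactly $d,\ n/2,\ n-d,\ n$ (with $n$ even). (1) If $d^\perp\ge 4$ and $\dim C=k$ (with $2\le k\le n-1$), then $\dfrac{n(2^{k-1}-n)}{(n-2d)^2}$ is a positive integer. (2) If $d^\perp\ge 6$, then $\dfrac{-n^2(n-1)(n-2)}{(n-2d)^2\left(n^2-(4d+3)n+4d^2+2\right)}$ is a positive integer. (3) If $d^\perp\ge 8$, then $n=(m^2+8)/3$ for some $m\in\mathbb{Z}$, and $$\frac{n^2(n^2-3n+2)}{6(3n-8)}=\frac{(m^2+2)(m^2+5)(m^2+8)^2}{486\,m^2}\quad\text{and}\quad \frac{2(n^4-7n^3+23n^2-41n+24)}{3(3n-8)}$$ are positive integers.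
   Context: $\mathbf{1}_n$ is the all-ones vector; $C^\perp$ is the dual code with respect to the standard inner product and $d^\perp$ its minimum nonzero weight; $C_u=\{c\in C:\mathrm{wt}(c)=u\}$ (Hamming weight). The paper notes that in the case $d^\perp-t=3$ the weight distribution of $C$ is supported on $0,d,n/2,n-d,n$ with $n$ even, and works under this assumption throughout. *)

From HB Require Import structures.
From mathcomp Require Import all_boot all_order all_algebra.
Set Implicit Arguments. Unset Strict Implicit. Unset Printing Implicit Defensive.
Import Order.TTheory GRing.Theory Num.Theory.
Local Open Scope ring_scope.

Definition wt (n : nat) (x : 'rV['F_2]_n) : nat := #|[set i : 'I_n | x 0 i != 0]|.

Definition dotF2 (n : nat) (x y : 'rV['F_2]_n) : 'F_2 := \sum_(i < n) x 0 i * y 0 i.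

Definition dual_code (n : nat) (C : {vspace 'rV['F_2]_n}) : {set 'rV['F_2]_n} :=
  [set x : 'rV['F_2]_n | [forall c : 'rV['F_2]_n, (c \in C) ==> (dotF2 x c == 0)]].

Definition has_weight (n : nat) (C : {vspace 'rV['F_2]_n}) (u : nat) : bool :=
  [exists c : 'rV['F_2]_n, (c \in C) && (wt c == u)].

Definition min_dist (n : nat) (C : {vspace 'rV['F_2]_n}) (d : nat) : Prop :=
  (exists2 c, (c \in C) && (c != 0) & wt c = d) /\
  (forall c, c \in C -> c != 0 -> (d <= wt c)%N).

Definition dual_min_dist (n : nat) (C : {vspace 'rV['F_2]_n}) (dp : nat) : Prop :=
  (exists2 x, (x \in dual_code C) && (x != 0) & wt x = dp) /\
  (forall x, x \in dual_code C -> x != 0 -> (dp <= wt x)%N).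

Definition num_low_weights (n : nat) (C : {vspace 'rV['F_2]_n}) (t : nat) : nat :=
  #|[set u : 'I_n.+1 | (0 < (u : nat))%N && ((u : nat) <= n - t)%N && has_weight C u]|.

Definition ones (n : nat) : 'rV['F_2]_n := const_mx 1.

Definition is_posint (q : rat) : Prop := exists p : nat, (0 < p)%N /\ q = p%:R.

From HB Require Import structures.
From mathcomp Require Import all_boot all_order all_algebra.
From mathcomp Require Import finfield.
From mathcomp Require Import ring zify.
Import Order.TTheory GRing.Theory Num.Theory.
Local Open Scope ring_scope.

Set Implicit Arguments. Unset Strict Implicit. Unset Printing Implicit Defensive.

(* Pless power moments.  Write bias c = n - 2 wt c = sum_i (-1)^(c_i).  Expanding
   (bias c)^j gives a sum of characters (-1)^<v, c> over vectors v of weight at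
   most j, and averaging a character over C gives 0 unless v lies in the dual
   code; for j < d^perp only v = 0 survives.  Hence for j < d^perp the j-th moment
   of bias over C is |C| / 2^n times the moment M_j over all of F_2^n, and
   M_2, M_4, M_6 are 2^n times n, 3n^2 - 2n and 15n^3 - 30n^2 + 16n.
   The three low weights force 0 < d < n/2; since 1 is a codeword, A_0 = A_n = 1
   and A_(n-d) = A_d.  With a = A_d, b = A_(n/2), X = (n - 2d)^2 and
   N = |C| = 2 + 2a + b the moments read 2^n (2n^j + 2a X^(j/2)) = N M_j.
   The second moment gives (1), the second and fourth give (2), and the sixth
   forces X = 3n - 8, which determines N, a and b, giving (3). *)

Lemma F2_cases (a : 'F_2) : a = 0 \/ a = 1.
Proof. by case: a => [[|[|k]] lt_a2]; [left|right|]; try apply: val_inj. Qed.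

Lemma memvDr (K : fieldType) (vT : vectType K) (U : {vspace vT}) u v :
  u \in U -> (v + u \in U) = (v \in U).
Proof.
move=> Uu; apply/idP/idP => [|Uv]; last exact: memvD.
by move=> /memvB/(_ Uu); rewrite addrK.
Qed.

Section Bias.

Variables (R : numFieldType) (n : nat).
Implicit Types (a : 'F_2) (x c v : 'rV['F_2]_n).

Definition sign2 a : R := if a == 0 then 1 else -1.

Lemma sign2D a a' : sign2 (a + a') = sign2 a * sign2 a'.
Proof.
by case: (F2_cases a) => ->; case: (F2_cases a') => ->; rewrite /sign2 /=; ring.
Qed.

Lemma sign2_add1 a : sign2 (a + 1) = - sign2 a.
Proof. by rewrite sign2D /sign2 /= mulrN1. Qed.

Definition bias x : R := \sum_(i < n) sign2 (x 0 i).

Lemma bias_wt x : bias x = n%:R - 2 * (wt x)%:R.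
Proof.
have -> : (wt x)%:R = \sum_(i < n) ((x 0 i != 0)%:R : R).
  rewrite /wt -sum1_card natr_sum big_mkcond /=.
  by apply: eq_bigr => i _; rewrite inE; case: (_ != _).
rewrite mulr_sumr -[in n%:R](card_ord n) -sumr_const -sumrB /bias.
by apply: eq_bigr => i _; case: (F2_cases (x 0 i)) => ->; rewrite /sign2 /=; ring.
Qed.

Lemma wt_le x : (wt x <= n)%N.
Proof. by rewrite /wt (leq_trans (max_card _)) ?card_ord. Qed.

Lemma wt_eq0 x : (wt x == 0%N) = (x == 0).
Proof.
rewrite /wt cards_eq0; apply/eqP/eqP => [x0|->]; last first.
  by apply/setP => i; rewrite !inE mxE eqxx.
apply/rowP => i; rewrite mxE; apply/eqP; apply: contraFT (in_set0 i) => xi.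
by rewrite -x0 inE.
Qed.

Lemma wt_add_ones x : wt (x + ones n) = (n - wt x)%N.
Proof.
rewrite /wt [LHS]cardsCs card_ord; congr (_ - _)%N; apply: eq_card => i.
by rewrite !inE !mxE; case: (F2_cases (x 0 i)) => ->.
Qed.

Lemma dotF2D v : {morph dotF2 v : c c' / c + c'}.
Proof.
by move=> c c'; rewrite /dotF2 -big_split; apply: eq_bigr => i _; rewrite mxE mulrDr.
Qed.

Lemma sum_sign2_dot (C : {vspace 'rV['F_2]_n}) v :
  \sum_(c in C) sign2 (dotF2 v c) = if v \in dual_code C then #|C|%:R else 0.
Proof.
rewrite inE; case: ifPn => [/forallP vC | /forallPn[c0]].
  rewrite -sumr_const; apply: eq_bigr => c Cc.
  by have /implyP/(_ Cc)/eqP-> := vC c.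
rewrite negb_imply => /andP[Cc0 vc0]; set s := \sum_(c in C) _.
have vc0_1 : dotF2 v c0 = 1 by case: (F2_cases (dotF2 v c0)) vc0 => ->.
have : s = - s.
  rewrite {1}/s (reindex_inj (addIr c0)) /= -sumrN.
  apply: eq_big => [c | c _]; last by rewrite dotF2D sign2D vc0_1 /sign2 /= mulrN1.
  exact: memvDr.
by move/eqP; rewrite -addr_eq0 -mulr2n mulrn_eq0 => /eqP.
Qed.

Definition parity_vec j (f : {ffun 'I_j -> 'I_n}) : 'rV['F_2]_n :=
  \row_i \sum_(l < j) ((f l == i)%:R : 'F_2).

Lemma dotF2_parity_vec j (f : {ffun 'I_j -> 'I_n}) c :
  dotF2 (parity_vec f) c = \sum_(l < j) c 0 (f l).
Proof.
rewrite /dotF2; under eq_bigr do rewrite mxE mulr_suml.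
rewrite exchange_big; apply: eq_bigr => l _.
rewrite (bigD1 (f l)) //= eqxx mul1r big1 ?addr0 // => i fl_i.
by rewrite eq_sym (negbTE fl_i) mul0r.
Qed.

Lemma wt_parity_vec j (f : {ffun 'I_j -> 'I_n}) : (wt (parity_vec f) <= j)%N.
Proof.
rewrite /wt -[j in (_ <= j)%N]card_ord (leq_trans _ (leq_imset_card f _)) //.
apply/subset_leq_card/subsetP => i; rewrite inE mxE; apply: contraR => f'i.
by rewrite big1 // => l _; case: eqP => // fl_i; case/negP: f'i; rewrite -fl_i imset_f.
Qed.

Lemma bias_expE j c :
  bias c ^+ j = \sum_(f : {ffun 'I_j -> 'I_n}) sign2 (dotF2 (parity_vec f) c).
Proof.
rewrite -[j in LHS]card_ord -prodr_const /bias bigA_distr_bigA.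
by apply: eq_bigr => f _; rewrite dotF2_parity_vec (big_morph sign2 sign2D (erefl _)).
Qed.

Lemma sum_bias_exp (C : {vspace 'rV['F_2]_n}) j :
    (forall v, v \in dual_code C -> v != 0 -> (j < wt v)%N) ->
  \sum_(c in C) bias c ^+ j =
    #|C|%:R * #|[set f : {ffun 'I_j -> 'I_n} | parity_vec f == 0]|%:R.
Proof.
move=> dual_wt; under eq_bigr do rewrite bias_expE.
rewrite exchange_big /= (bigID (fun f => parity_vec f == 0)) /=.
rewrite [X in _ + X]big1 ?addr0 => [|f f_neq0]; last first.
  rewrite sum_sign2_dot ifN //; apply: contra f_neq0 => /dual_wt wt_f.
  by apply: contraLR (wt_parity_vec f); rewrite -ltnNge => /wt_f.
rewrite mulr_natr -sumr_const; apply: eq_big => [f | f /eqP->].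
  by rewrite inE.
rewrite sum_sign2_dot ifT // inE; apply/forallP => c; apply/implyP => _.
by rewrite /dotF2 big1 // => i _; rewrite mxE mul0r.
Qed.

Lemma dual_code_fullv v : v \in dual_code fullv -> v = 0.
Proof.
rewrite inE => /forallP dual_v; apply/rowP => i; rewrite mxE.
have /implyP/(_ (memvf _))/eqP <- := dual_v (delta_mx 0 i).
rewrite /dotF2 (bigD1 i) //= !mxE !eqxx mulr1 big1 ?addr0 // => k k_i.
by rewrite !mxE (negbTE k_i) andbF mulr0.
Qed.

Lemma card_rV_F2 : #|'rV['F_2]_n| = (2 ^ n)%N.
Proof. by rewrite card_mx card_Fp // mul1n. Qed.

Lemma power_moment (C : {vspace 'rV['F_2]_n}) j :
    (forall v, v \in dual_code C -> v != 0 -> (j < wt v)%N) ->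
  (2 ^ n)%:R * \sum_(c in C) bias c ^+ j = #|C|%:R * \sum_x bias x ^+ j.
Proof.
move=> /sum_bias_exp->.
rewrite (eq_bigl (fun x => x \in fullv)) => [|x]; last by rewrite memvf.
rewrite sum_bias_exp => [|v /dual_code_fullv->]; last by rewrite eqxx.
by rewrite card_vspacef card_rV_F2 mulrCA.
Qed.

End Bias.

Section FullMoments.

Variables (R : numFieldType) (n : nat).
Implicit Types x : 'rV['F_2]_n.

Definition prefix_bias k x : R := \sum_(i < n | (i < k)%N) sign2 R (x 0 i).

Lemma prefix_bias0 x : prefix_bias 0 x = 0.
Proof. exact: big_pred0. Qed.

Lemma prefix_bias_full x : prefix_bias n x = bias R x.
Proof. by apply: eq_bigl => i; rewrite ltn_ord. Qed.

Lemma prefix_biasS k (lt_kn : (k < n)%N) x :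
  prefix_bias k.+1 x = prefix_bias k x + sign2 R (x 0 (Ordinal lt_kn)).
Proof.
rewrite /prefix_bias (bigD1 (Ordinal lt_kn)) //= addrC; congr (_ + _).
by apply: eq_bigl => i; rewrite ltnS [(i < k)%N]ltn_neqAle andbC.
Qed.

Lemma sum_prefix_biasS k (lt_kn : (k < n)%N) (F : R -> R) :
  \sum_x F (prefix_bias k.+1 x) =
    \sum_x (F (prefix_bias k x + 1) + F (prefix_bias k x - 1)) / 2.
Proof.
set i := Ordinal lt_kn; set e : 'rV['F_2]_n := delta_mx 0 i.
have flip : \sum_x F (prefix_bias k x + sign2 R (x 0 i)) =
            \sum_x F (prefix_bias k x - sign2 R (x 0 i)).
  rewrite (reindex_inj (addIr e)); apply: eq_bigr => x _ /=.
  have xe_i : (x + e) 0 i = x 0 i + 1 by rewrite !mxE !eqxx.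
  have pb_xe : prefix_bias k (x + e) = prefix_bias k x.
    apply: eq_bigr => l lt_lk; rewrite !mxE eqxx /=.
    by rewrite (_ : l == i = false) ?addr0 //; apply: contraTF lt_lk => /eqP->; rewrite ltnn.
  by rewrite xe_i pb_xe sign2_add1.
have two_neq0 : 2 != 0 :> R by rewrite pnatr_eq0.
rewrite -mulr_suml; apply: (canRL (mulfK two_neq0)); rewrite mulr_natr mulr2n.
under eq_bigr do rewrite prefix_biasS.
rewrite {2}flip -big_split; apply: eq_bigr => x _ /=.
by case: (F2_cases (x 0 i)) => ->; rewrite /sign2 //= opprK addrC.
Qed.

Lemma sum_prefix_bias_moments k : (k <= n)%N ->
  [/\ \sum_x prefix_bias k x ^+ 2 = (2 ^ n)%:R * k%:R,
      \sum_x prefix_bias k x ^+ 4 = (2 ^ n)%:R * (3 * k%:R ^+ 2 - 2 * k%:R) &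
      \sum_x prefix_bias k x ^+ 6 =
        (2 ^ n)%:R * (15 * k%:R ^+ 3 - 30 * k%:R ^+ 2 + 16 * k%:R)].
Proof.
elim: k => [_ | k IHk lt_kn].
  by split; rewrite big1 => [|x _]; rewrite ?prefix_bias0 ?expr0n //=; ring.
have [M2 M4 M6] := IHk (ltnW lt_kn).
have two_neq0 : 2 != 0 :> R by rewrite pnatr_eq0.
have avg2 (S : R) : ((S + 1) ^+ 2 + (S - 1) ^+ 2) / 2 = S ^+ 2 + 1 by field.
have avg4 (S : R) : ((S + 1) ^+ 4 + (S - 1) ^+ 4) / 2 = S ^+ 4 + 6 * S ^+ 2 + 1 by field.
have avg6 (S : R) : ((S + 1) ^+ 6 + (S - 1) ^+ 6) / 2 =
    S ^+ 6 + 15 * S ^+ 4 + 15 * S ^+ 2 + 1 by field.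
rewrite !(sum_prefix_biasS lt_kn (fun S => S ^+ 2), sum_prefix_biasS lt_kn (fun S => S ^+ 4),
          sum_prefix_biasS lt_kn (fun S => S ^+ 6)).
split.
- under eq_bigr do rewrite avg2.
  by rewrite big_split /= sumr_const card_rV_F2 M2 -natr1; ring.
- under eq_bigr do rewrite avg4.
  by rewrite !big_split /= -mulr_sumr sumr_const card_rV_F2 M2 M4 -natr1; ring.
- under eq_bigr do rewrite avg6.
  rewrite !big_split /= -!mulr_sumr sumr_const card_rV_F2 M2 M4 M6 -natr1; ring.
Qed.

Lemma sum_bias_moments :
  [/\ \sum_(x : 'rV['F_2]_n) bias R x ^+ 2 = (2 ^ n)%:R * n%:R,
      \sum_(x : 'rV['F_2]_n) bias R x ^+ 4 = (2 ^ n)%:R * (3 * n%:R ^+ 2 - 2 * n%:R) &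
      \sum_(x : 'rV['F_2]_n) bias R x ^+ 6 =
        (2 ^ n)%:R * (15 * n%:R ^+ 3 - 30 * n%:R ^+ 2 + 16 * n%:R)].
Proof.
have [M2 M4 M6] := sum_prefix_bias_moments (leqnn n).
by split; [rewrite -M2 | rewrite -M4 | rewrite -M6];
  apply: eq_bigr => x _; rewrite prefix_bias_full.
Qed.

End FullMoments.

Section WeightDistribution.

Variables (R : numFieldType) (n : nat) (C : {vspace 'rV['F_2]_n}).

Definition wcount u := #|[set c | (c \in C) && (wt c == u)]|.

Lemma sum_wt_support (s : seq nat) (F : nat -> R) :
    uniq s -> (forall c, c \in C -> wt c \in s) ->
  \sum_(c in C) F (wt c) = \sum_(u <- s) (wcount u)%:R * F u.
Proof.
move=> s_uniq wtC.
transitivity (\sum_(c in C) \sum_(u <- s) (wt c == u)%:R * F u).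
  apply: eq_bigr => c /wtC s_c; rewrite (bigD1_seq (wt c)) //= eqxx mul1r.
  by rewrite big1 ?addr0 // => u; rewrite eq_sym => /negPf->; rewrite mul0r.
rewrite exchange_big; apply: eq_bigr => u _; rewrite -mulr_suml; congr (_ * _).
rewrite /wcount -sum1_card natr_sum [LHS]big_mkcond [RHS]big_mkcond; apply: eq_bigr => c _.
by rewrite inE; case: (c \in C); case: (wt c == u).
Qed.

Lemma wcount0 : wcount 0 = 1%N.
Proof.
rewrite /wcount (_ : [set c | _] = [set 0]) ?cards1 //.
by apply/setP => c; rewrite !inE wt_eq0 andb_idl // => /eqP->; exact: mem0v.
Qed.

Lemma wcount_compl u : ones n \in C -> (u <= n)%N -> wcount (n - u)%N = wcount u.
Proof.
move=> onesC le_un; rewrite /wcount -(card_preimset _ (addIr (ones n))).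
apply: eq_card => c; rewrite !inE memvDr // wt_add_ones.
have := wt_le c; case: (c \in C) => //= le_wn; apply/eqP/eqP; lia.
Qed.

Lemma wcount_gt0 u : (0 < wcount u)%N = has_weight C u.
Proof.
apply/card_gt0P/existsP => [[c] | [c Cc_u]]; last by exists c; rewrite inE.
by rewrite inE; exists c.
Qed.

End WeightDistribution.

Lemma natr_gap_neq0 (R : numFieldType) n d :
  (d < n./2)%N -> n%:R - 2 * d%:R != 0 :> R.
Proof. by move=> d_lt; have := halfK n; rewrite subr_eq0 -natrM eqr_nat; lia. Qed.

Lemma natr_neq012 (R : numFieldType) n d : (0 < d < n./2)%N ->
  [/\ n%:R != 0 :> R, n%:R != 1 :> R & n%:R != 2 :> R].
Proof.
by move=> d_bounds; have := halfK n; split; rewrite ?pnatr_eq0 ?pnatr_eq1 ?eqr_nat; lia.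
Qed.

Section SymmetricWeights.

Variables (R : numFieldType) (n d : nat) (C : {vspace 'rV['F_2]_n}).
Hypotheses (onesC : ones n \in C) (n_even : ~~ odd n).
Hypotheses (d_gt0 : (0 < d)%N) (d_lt_half : (d < n./2)%N).
Hypothesis wtC : forall c, c \in C -> wt c \in [:: 0; d; n./2; n - d; n]%N.

Let a : R := (wcount C d)%:R.
Let b : R := (wcount C n./2)%:R.

Lemma sum_symmetric_weights (F : nat -> R) :
  \sum_(c in C) F (wt c) = F 0%N + a * (F d + F (n - d)%N) + b * F n./2 + F n.
Proof.
have n_half := even_halfK n_even.
rewrite (sum_wt_support _ _ wtC); last by rewrite /= !inE; apply/and5P; split; lia.
have wcount_n : wcount C n = 1%N by rewrite -[n in wcount C n]subn0 wcount_compl ?wcount0.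
rewrite !big_cons big_nil wcount0 wcount_n wcount_compl //; last lia.
by rewrite /a /b; ring.
Qed.

Lemma card_symmetric_weights : #|C|%:R = 2 + 2 * a + b :> R.
Proof.
by have := sum_symmetric_weights (fun=> 1); rewrite sumr_const /= => ->; ring.
Qed.

Lemma sum_bias_symmetric_weights i : (0 < i)%N ->
  \sum_(c in C) bias R c ^+ (2 * i) =
    2 * (n%:R ^+ 2) ^+ i + 2 * a * ((n%:R - 2 * d%:R) ^+ 2) ^+ i.
Proof.
move=> i_gt0; under eq_bigr do rewrite bias_wt.
rewrite (sum_symmetric_weights (fun u => (n%:R - 2 * u%:R) ^+ (2 * i))) !exprM.
have sqr_n : (n%:R - 2 * n%:R) ^+ 2 = n%:R ^+ 2 :> R by ring.
have sqr_nd : (n%:R - 2 * (n - d)%:R) ^+ 2 = (n%:R - 2 * d%:R) ^+ 2 :> R.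
  by rewrite natrB; [ring | lia].
have half0 : n%:R - 2 * n./2%:R = 0 :> R by rewrite -natrM mul2n (even_halfK n_even) subrr.
have zero_pow : (0 : R) ^+ 2 ^+ i = 0 by rewrite -exprM expr0n muln_eq0 /= eqn0Ngt i_gt0.
by rewrite mulr0 subr0 sqr_n sqr_nd half0 zero_pow; ring.
Qed.

Lemma moment_equations dp : dual_min_dist C dp ->
  let X := (n%:R - 2 * d%:R) ^+ 2 in let N : R := #|C|%:R in
  [/\ (2 < dp)%N -> 2 * n%:R ^+ 2 + 2 * a * X = N * n%:R,
      (4 < dp)%N -> 2 * n%:R ^+ 4 + 2 * a * X ^+ 2 = N * (3 * n%:R ^+ 2 - 2 * n%:R) &
      (6 < dp)%N -> 2 * n%:R ^+ 6 + 2 * a * X ^+ 3 =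
                    N * (15 * n%:R ^+ 3 - 30 * n%:R ^+ 2 + 16 * n%:R)].
Proof.
move=> [_ dual_wt] X N.
have moment i : (0 < i)%N -> (2 * i < dp)%N ->
    N * \sum_(x : 'rV['F_2]_n) bias R x ^+ (2 * i) =
    (2 ^ n)%:R * (2 * (n%:R ^+ 2) ^+ i + 2 * a * X ^+ i).
  move=> i_gt0 lt_2i_dp; rewrite -sum_bias_symmetric_weights // -power_moment //.
  by move=> v dual_v v_neq0; apply: leq_trans lt_2i_dp (dual_wt v dual_v v_neq0).
have two_pow_neq0 : (2 ^ n)%:R != 0 :> R by rewrite pnatr_eq0 expn_eq0.
have [M2 M4 M6] := sum_bias_moments R n.
split=> lt_dp.
- by have := moment 1%N isT lt_dp; rewrite M2 mulrCA => /(mulfI two_pow_neq0)->; ring.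
- by have := moment 2%N isT lt_dp; rewrite M4 mulrCA => /(mulfI two_pow_neq0)->; ring.
- by have := moment 3%N isT lt_dp; rewrite M6 mulrCA => /(mulfI two_pow_neq0)->; ring.
Qed.

End SymmetricWeights.

Lemma eq_lincomb1 (R : comRingType) (x y l r c : R) :
  l = r -> x - y = c * (l - r) -> x = y.
Proof. by move=> -> /eqP; rewrite subrr mulr0 subr_eq0 => /eqP. Qed.

Lemma eq_lincomb (R : comRingType) (x y l1 r1 l2 r2 c1 c2 : R) :
  l1 = r1 -> l2 = r2 -> x - y = c1 * (l1 - r1) + c2 * (l2 - r2) -> x = y.
Proof. by move=> -> -> /eqP; rewrite !subrr !mulr0 addr0 subr_eq0 => /eqP. Qed.

Section MomentAlgebra.

(* [n], [X], [a], [N] stand for n, (n - 2d)^2, #|C_d| and #|C|. *)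
Variables (R : numFieldType) (n X a N : R).
Hypothesis moment2 : 2 * n ^+ 2 + 2 * a * X = N * n.
Hypothesis moment4 : 2 * n ^+ 4 + 2 * a * X ^+ 2 = N * (3 * n ^+ 2 - 2 * n).
Hypotheses (n_neq0 : n != 0) (n_neq1 : n != 1) (n_neq2 : n != 2).

Lemma moment2_solve : a * X = n * (N / 2 - n).
Proof. by apply: (eq_lincomb1 moment2 (c := 1 / 2)); field. Qed.

Lemma moment2_solution : X != 0 -> a = n * (N / 2 - n) / X.
Proof. by move=> X_neq0; rewrite -moment2_solve mulfK. Qed.


Lemma moment24_factor : (N - 2 * n) * (X - 3 * n + 2) = - (2 * n * (n - 1) * (n - 2)).
Proof.
by apply: (mulfI n_neq0); apply: (eq_lincomb moment2 moment4 (c1 := - X) (c2 := 1)); ring.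
Qed.

Lemma moment24_solve : a * X * (X - 3 * n + 2) = - (n ^+ 2 * (n - 1) * (n - 2)).
Proof.
apply: (eq_lincomb moment2 moment24_factor (c1 := (X - 3 * n + 2) / 2) (c2 := n / 2)).
by field.
Qed.

Lemma moment24_solution :
  a = - (n ^+ 2 * (n - 1) * (n - 2)) / (X * (X - 3 * n + 2)).
Proof.
have rhs_neq0 : n ^+ 2 * (n - 1) * (n - 2) != 0.
  by rewrite !mulf_neq0 ?expf_neq0 ?subr_eq0.
rewrite -moment24_solve -mulrA mulfK //.
by apply: contraNneq rhs_neq0 => XY0; rewrite -oppr_eq0 -moment24_solve -mulrA XY0 mulr0.
Qed.

Hypothesis moment6 :
  2 * n ^+ 6 + 2 * a * X ^+ 3 = N * (15 * n ^+ 3 - 30 * n ^+ 2 + 16 * n).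
Hypothesis N_neq0 : N != 0.

Lemma moment26_factor :
  (N - 2 * n) * (X ^+ 2 - (15 * n ^+ 2 - 30 * n + 16)) =
    2 * n * (15 * n ^+ 2 - 30 * n + 16) - 2 * n ^+ 5.
Proof.
by apply: (mulfI n_neq0); apply: (eq_lincomb moment2 moment6 (c1 := - X ^+ 2) (c2 := 1)); ring.
Qed.

(* The sixth moment leaves two roots for X; the other one would force N = 0. *)
Lemma moment246_X : X = 3 * n - 8.
Proof.
have P_neq0 : 2 * n * (n - 1) * (n - 2) != 0.
  by rewrite !mulf_neq0 ?subr_eq0 ?pnatr_eq0.
have : 2 * n * (n - 1) * (n - 2) *
         ((X - 3 * n + 8) * (X - 3 * n + 2 - (n - 1) * (n - 2))) = 0.
  apply: (eq_lincomb moment26_factor moment24_factor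
    (c1 := - (X - 3 * n + 2)) (c2 := X ^+ 2 - (15 * n ^+ 2 - 30 * n + 16))); ring.
move/eqP; rewrite mulf_eq0 (negbTE P_neq0) mulf_eq0 /= => /orP[/eqP X_eq | /eqP Y_eq].
  by apply/eqP; rewrite -subr_eq0 -X_eq; apply/eqP; ring.
have : N * ((n - 1) * (n - 2)) = 0.
  by apply: (eq_lincomb moment24_factor Y_eq (c1 := 1) (c2 := - (N - 2 * n))); ring.
move/eqP; rewrite !mulf_eq0 !subr_eq0.
by rewrite (negbTE N_neq0) (negbTE n_neq1) (negbTE n_neq2).
Qed.

Lemma moment246_N : N = 2 * n + n * (n - 1) * (n - 2) / 3.
Proof.
have := moment24_factor; rewrite moment246_X => factor.
by apply: (eq_lincomb1 factor (c := - 1 / 6)); field.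
Qed.

Lemma moment246_a : X != 0 -> a = n ^+ 2 * (n ^+ 2 - 3 * n + 2) / (6 * (3 * n - 8)).
Proof.
rewrite moment246_X => X_neq0.
have aX := moment2_solve; rewrite moment246_X moment246_N in aX.
by apply: (eq_lincomb1 aX (c := 1 / (3 * n - 8))); field; rewrite X_neq0.
Qed.

Lemma moment246_b b : N = 2 + 2 * a + b -> X != 0 ->
  b = 2 * (n ^+ 4 - 7 * n ^+ 3 + 23 * n ^+ 2 - 41 * n + 24) / (3 * (3 * n - 8)).
Proof.
move=> N_eq X_neq0; have a_eq := moment246_a X_neq0; rewrite moment246_X in X_neq0.
have b_eq : b = N - 2 - 2 * a by rewrite N_eq; ring.
by rewrite b_eq moment246_N a_eq; field; rewrite X_neq0.
Qed.

Lemma moment246_solution b m : N = 2 + 2 * a + b -> m ^+ 2 = X -> X != 0 ->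
  [/\ n = (m ^+ 2 + 8) / 3,
      n ^+ 2 * (n ^+ 2 - 3 * n + 2) / (6 * (3 * n - 8)) =
        (m ^+ 2 + 2) * (m ^+ 2 + 5) * (m ^+ 2 + 8) ^+ 2 / (486 * m ^+ 2),
      a = n ^+ 2 * (n ^+ 2 - 3 * n + 2) / (6 * (3 * n - 8)) &
      b = 2 * (n ^+ 4 - 7 * n ^+ 3 + 23 * n ^+ 2 - 41 * n + 24) / (3 * (3 * n - 8))].
Proof.
move=> N_eq m_sqr X_neq0; split; [| | exact: moment246_a | exact: moment246_b].
  by rewrite m_sqr moment246_X; field.
by rewrite m_sqr moment246_X; field; rewrite -moment246_X X_neq0.
Qed.

End MomentAlgebra.

Section Spectrum.

Variables (n d : nat) (C : {vspace 'rV['F_2]_n}).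
Hypothesis spectrum :
  forall u, (0 < u)%N -> has_weight C u = (u \in [:: d; n./2; n - d; n]%N).

Lemma spectrum_wt c : c \in C -> wt c \in [:: 0; d; n./2; n - d; n]%N.
Proof.
move=> Cc; have [->|wt_gt0] := posnP (wt c); first exact: mem_head.
rewrite inE -spectrum //; apply/orP; right; apply/existsP; exists c.
by rewrite Cc eqxx.
Qed.

Lemma low_weights_neq_half t :
  (0 < t)%N -> num_low_weights C t = 3%N -> d != n./2.
Proof.
move=> t_gt0 low3; apply/eqP => d_half.
suff : (num_low_weights C t < 3)%N by rewrite low3.
apply: leq_ltn_trans (subset_leq_card (_ : _ \subset [set inord d; inord (n - d)])) _.
  apply/subsetP => u; rewrite !inE => /andP[/andP[u_gt0 u_le] ].
  rewrite spectrum // !inE -d_half => /or4P[] /eqP u_eq.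
  1,2: by apply/orP; left; apply/eqP/val_inj; rewrite /= inordK // -u_eq ltn_ord.
  - by apply/orP; right; apply/eqP/val_inj; rewrite /= inordK // -u_eq ltn_ord.
  - by move: u_le; rewrite u_eq; lia.
by rewrite cards2; case: (_ != _).
Qed.

Lemma spectrum_lt_half t : min_dist C d -> ~~ odd n ->
  (0 < t)%N -> num_low_weights C t = 3%N -> (0 < d < n./2)%N.
Proof.
move=> [[c /andP[Cc c_neq0] wt_c] min_wt] n_even t_gt0 low3.
have d_gt0 : (0 < d)%N by rewrite -wt_c lt0n wt_eq0.
have half_gt0 : (0 < n./2)%N.
  by have := even_halfK n_even; have := wt_le c; lia.
have /existsP[c' /andP[Cc' /eqP wt_c']] : has_weight C n./2.
  by rewrite spectrum // !inE eqxx orbT.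
rewrite d_gt0 ltn_neqAle (low_weights_neq_half t_gt0 low3) -wt_c' min_wt //.
by rewrite -wt_eq0 wt_c' -lt0n.
Qed.

End Spectrum.

Theorem lemma5p1 (n d dp t : nat) (C : {vspace 'rV['F_2]_n}) :
  min_dist C d ->
  ones n \in C ->
  dual_min_dist C dp ->
  (0 < t)%N ->
  (dp - t = 3)%N ->
  num_low_weights C t = 3%N ->
  ~~ odd n ->
  (forall u : nat, (0 < u)%N -> has_weight C u = (u \in [:: d; n./2; n - d; n]%N)) ->
  let nq : rat := n%:R in
  let dq : rat := d%:R in
  [/\ ((4 <= dp)%N -> (2 <= \dim C <= n.-1)%N ->
        is_posint (nq * (2%:R ^+ (\dim C).-1 - nq) / (nq - 2%:R * dq) ^+ 2)),
      ((6 <= dp)%N ->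
        is_posint (- (nq ^+ 2 * (nq - 1) * (nq - 2%:R)) /
           ((nq - 2%:R * dq) ^+ 2 *
            (nq ^+ 2 - (4%:R * dq + 3%:R) * nq + 4%:R * dq ^+ 2 + 2%:R)))) &
      ((8 <= dp)%N ->
        exists m : int,
          let mq : rat := m%:~R in
          [/\ nq = (mq ^+ 2 + 8%:R) / 3%:R,
              nq ^+ 2 * (nq ^+ 2 - 3%:R * nq + 2%:R) / (6%:R * (3%:R * nq - 8%:R))
                = (mq ^+ 2 + 2%:R) * (mq ^+ 2 + 5%:R) * (mq ^+ 2 + 8%:R) ^+ 2
                  / (486%:R * mq ^+ 2),
              is_posint (nq ^+ 2 * (nq ^+ 2 - 3%:R * nq + 2%:R) / (6%:R * (3%:R * nq - 8%:R))) &
              is_posint (2%:R * (nq ^+ 4 - 7%:R * nq ^+ 3 + 23%:R * nq ^+ 2 - 41%:R * nq + 24%:R)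
                         / (3%:R * (3%:R * nq - 8%:R)))])].
Proof.
move=> dmin onesC dual_dp t_gt0 _ low3 n_even spectrum nq dq; rewrite {}/nq {}/dq.
have d_bounds := spectrum_lt_half spectrum dmin n_even t_gt0 low3.
have /andP[d_gt0 d_lt_half] := d_bounds.
have wtC := spectrum_wt spectrum.
have [M2 M4 M6] := moment_equations rat onesC n_even d_gt0 d_lt_half wtC dual_dp.
have N_eq := card_symmetric_weights rat onesC n_even d_gt0 d_lt_half wtC.
have gap_neq0 := natr_gap_neq0 rat d_lt_half.
have X_neq0 := expf_neq0 2 gap_neq0.
have [n_neq0 n_neq1 n_neq2] := natr_neq012 rat d_bounds.
have N_neq0 : #|C|%:R != 0 :> rat by rewrite card_vspace card_Fp // pnatr_eq0 expn_eq0.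
have a_posint : is_posint (wcount C d)%:R.
  by exists (wcount C d); rewrite wcount_gt0 spectrum ?inE ?eqxx.
have b_posint : is_posint (wcount C n./2)%:R.
  by exists (wcount C n./2); rewrite wcount_gt0 spectrum ?inE ?eqxx ?orbT //; lia.
split=> [dp4 /andP[dim_ge2 _] | dp6 | dp8].
- have N_pow : #|C|%:R = 2 * 2 ^+ (\dim C).-1 :> rat.
    by rewrite card_vspace card_Fp // natrX -exprS prednK // ltnW.
  suff -> : n%:R * (2 ^+ (\dim C).-1 - n%:R) / (n%:R - 2 * d%:R) ^+ 2 = (wcount C d)%:R :> rat.
    by [].
  by rewrite (moment2_solution (M2 (ltnW dp4)) X_neq0) N_pow; field.
- have [dp2 dp4] : (2 < dp)%N /\ (4 < dp)%N by lia.
  rewrite (_ : _ + 2 = (n%:R - 2 * d%:R) ^+ 2 - 3 * n%:R + 2); last by ring.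
  by rewrite -(moment24_solution (M2 dp2) (M4 dp4) n_neq0 n_neq1 n_neq2).
- have [dp2 dp4 dp6] : [/\ (2 < dp)%N, (4 < dp)%N & (6 < dp)%N] by split; lia.
  have m_sqr : ((n%:Z - 2 * d%:Z)%:~R : rat) ^+ 2 = (n%:R - 2 * d%:R) ^+ 2.
    by rewrite intrD intrN intrM.
  have [n_eq a_eq_m a_eq b_eq] := moment246_solution (M2 dp2) (M4 dp4) n_neq0 n_neq1 n_neq2
    (M6 dp6) N_neq0 N_eq m_sqr X_neq0.
  by exists (n%:Z - 2 * d%:Z); split; rewrite // -?a_eq -?b_eq.
Qed.
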